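(* Let $f(X)=X-\frac{1}{X}$. There are infinitely many pairs of positive rational numbers $(x,y)$ such that $f(x)\,f(y)=f(4)^2$. *)

From HB Require Import structures.
From mathcomp Require Import all_boot all_order all_algebra.
Set Implicit Arguments. Unset Strict Implicit. Unset Printing Implicit Defensive.
Import Order.TTheory GRing.Theory Num.Theory.
Local Open Scope ring_scope.

Definition f (x : rat) : rat := x - x^-1.

Definition is_sol (p : rat * rat) : Prop :=
  0 < p.1 /\ 0 < p.2 /\ f p.1 * f p.2 = f 4 ^+ 2.

From Stdlib Require Import ZArith.
From HB Require Import structures.
From mathcomp Require Import all_boot all_order all_algebra.
From mathcomp Require Import ssrZ zify ring.
Import Order.TTheory GRing.Theory Num.Theory.
Set Implicit Arguments. Unset Strict Implicit.

(* If r^2 = t^2 + 64^2 and s^2 = t^2 + 225^2 with t, r, s > 0, then x = (t + r)/64 and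
   y = (225 + s)/t satisfy f x = t/32 and f y = 450/t, so f x * f y = 225/16 = f(4)^2.
   The rationals t making both t^2 + 64^2 and t^2 + 225^2 squares form an elliptic curve,
   on which duplication acts by t |-> |t^4 - 64^2 225^2| / (2 t r s).  Writing t = n/d in
   integers with n odd and d = 2^k times an odd number (k >= 1), duplication raises k by
   one, so iterating it from one such point gives pairwise distinct t, hence infinitely
   many solutions. *)

Local Open Scope Z_scope.

Variant zpoint := ZPoint of Z & Z & Z & Z.

Section Doubling.
Variables a b : Z.

Definition on_curve (p : zpoint) : Prop :=
  let: ZPoint n d r s := p in
  r ^ 2 = n ^ 2 + (a * d) ^ 2 /\ s ^ 2 = n ^ 2 + (b * d) ^ 2.

Definition double (p : zpoint) : zpoint :=
  let: ZPoint n d r s := p in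
  ZPoint (Z.abs (n ^ 4 - (a * b * d ^ 2) ^ 2)) (2 * n * d * r * s)
         (n ^ 4 + 2 * (a * n * d) ^ 2 + (a * b * d ^ 2) ^ 2)
         (n ^ 4 + 2 * (b * n * d) ^ 2 + (a * b * d ^ 2) ^ 2).

Lemma double_on_curve p : on_curve p -> on_curve (double p).
Proof.
case: p => n d r s [er es]; cbn [on_curve double].
have -> : Z.abs (n ^ 4 - (a * b * d ^ 2) ^ 2) ^ 2 = (n ^ 4 - (a * b * d ^ 2) ^ 2) ^ 2.
  by rewrite !Z.pow_2_r Z.abs_square.
have ed c : (c * (2 * n * d * r * s)) ^ 2 = 4 * (c * n * d) ^ 2 * r ^ 2 * s ^ 2.
  by ring.
by rewrite !ed er es; split; ring.
Qed.

Lemma odd_sqr_add (n m r : Z) :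
  r ^ 2 = n ^ 2 + m ^ 2 -> Z.odd n -> Z.odd m = false -> Z.odd r.
Proof.
move=> e n_odd m_even.
by rewrite -(Z.odd_pow r 2) // e Z.odd_add !Z.odd_pow ?n_odd ?m_even.
Qed.

Definition odd_times_pow2 (k : nat) (n : Z) : Prop :=
  exists2 o, Z.odd o & n = 2 ^ Z.of_nat k * o.

Definition admissible (k : nat) (p : zpoint) : Prop :=
  let: ZPoint n d r s := p in
  [/\ on_curve p, [/\ 0 < n, 0 < d, 0 < r & 0 < s], Z.odd n,
      odd_times_pow2 k d & (0 < k)%N].

Lemma admissible_double k p : admissible k p -> admissible k.+1 (double p).
Proof.
case: p => n d r s [curve [n_gt0 d_gt0 r_gt0 s_gt0] n_odd [o o_odd d_eq] k_gt0].
have [er es] := curve.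
have d_even : Z.odd d = false by rewrite d_eq Z.odd_mul Z.odd_pow //; lia.
have ad_even c : Z.odd (c * d) = false by rewrite Z.odd_mul d_even andbF.
have r_odd := odd_sqr_add er n_odd (ad_even a).
have s_odd := odd_sqr_add es n_odd (ad_even b).
have m_odd : Z.odd (n ^ 4 - (a * b * d ^ 2) ^ 2).
  by rewrite Z.odd_sub !Z.odd_pow // !Z.odd_mul d_even !andbF n_odd.
split; first exact: double_on_curve.
- split.
  + have : n ^ 4 - (a * b * d ^ 2) ^ 2 <> 0 by move=> h; rewrite h in m_odd.
    lia.
  + by repeat apply: Z.mul_pos_pos.
  + nia.
  + nia.
- by case: (Z.abs_eq_or_opp (n ^ 4 - (a * b * d ^ 2) ^ 2)) => ->; rewrite ?Z.odd_opp.
- exists (n * o * r * s); first by rewrite !Z.odd_mul n_odd o_odd r_odd s_odd.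
  rewrite Nat2Z.inj_succ Z.pow_succ_r ?d_eq; [ring | lia].
- by [].
Qed.

End Doubling.

Lemma odd_pow2_cross_neq k1 k2 n1 n2 d1 d2 :
  (k1 < k2)%N -> Z.odd n1 -> Z.odd n2 ->
  odd_times_pow2 k1 d1 -> odd_times_pow2 k2 d2 -> n1 * d2 <> n2 * d1.
Proof.
move=> lt_k n1_odd n2_odd [o1 o1_odd ->] [o2 o2_odd ->] eq_cross.
have split_k2 : 2 ^ Z.of_nat k2 = 2 ^ Z.of_nat k1 * 2 ^ (Z.of_nat k2 - Z.of_nat k1).
  by rewrite -Z.pow_add_r; [f_equal; lia | lia | lia].
have : n1 * 2 ^ (Z.of_nat k2 - Z.of_nat k1) * o2 = n2 * o1.
  apply: (Z.mul_reg_l _ _ (2 ^ Z.of_nat k1)); first by apply: Z.pow_nonzero; lia.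
  by rewrite split_k2 in eq_cross; lia.
move/(congr1 Z.odd); rewrite !Z.odd_mul Z.odd_pow; last lia.
by rewrite /= n2_odd o1_odd andbF.
Qed.

(* t = 14400/t', where t' is 420/13 duplicated twice: the involution t |-> 64 * 225 / t
   of the curve turns the 2-adic valuation 12 of t' into -6. *)
Definition seed : zpoint :=
  ZPoint 254585991920237203982961830625 928626267768579864499508032
         261431060798652065373331876577 329348343334598874377492083425.

Lemma admissible_seed : admissible 64 225 6 seed.
Proof.
by split; [split | split | | exists 14509785433884060382804813 |]; vm_compute.
Qed.

Definition point (n : nat) : zpoint := Nat.iter n (double 64 225) seed.

Lemma admissible_point n : admissible 64 225 (n + 6) (point n).
Proof.
elim: n => [|n IHn]; first exact: admissible_seed.
exact: admissible_double.
Qed.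

Definition ratZ (z : Z) : rat := (int_of_Z z)%:~R.

Lemma ratZD (x y : Z) : ratZ (x + y) = (ratZ x + ratZ y)%R.
Proof. by rewrite /ratZ rmorphD intrD. Qed.

Lemma ratZM (x y : Z) : ratZ (x * y) = (ratZ x * ratZ y)%R.
Proof. by rewrite /ratZ rmorphM intrM. Qed.

Lemma ratZ_sqr (x : Z) : ratZ (x ^ 2) = (ratZ x ^+ 2)%R.
Proof. by rewrite Z.pow_2_r ratZM expr2. Qed.

Lemma ratZ_gt0 (x : Z) : 0 < x -> (0 < ratZ x)%R.
Proof. by move=> x_gt0; rewrite /ratZ ltr0z; lia. Qed.

Lemma ratZ_inj : injective ratZ.
Proof. by move=> x y /intr_inj /(can_inj int_of_ZK). Qed.

Lemma ratZ_affine_sqr (c n d r : Z) :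
  d <> 0 -> r ^ 2 = n ^ 2 + (c * d) ^ 2 ->
  ((ratZ r / ratZ d) ^+ 2 = (ratZ n / ratZ d) ^+ 2 + ratZ c ^+ 2)%R.
Proof.
move=> d_neq0 /(congr1 ratZ); rewrite ratZD !ratZ_sqr ratZM => e.
have rd_neq0 : (ratZ d != 0)%R by rewrite -[0%R]/(ratZ 0) (inj_eq ratZ_inj); apply/eqP.
by rewrite !expr_div_n e; field.
Qed.

Local Open Scope ring_scope.

Lemma f_pythagorean (u v w : rat) :
  v != 0 -> w ^+ 2 = u ^+ 2 + v ^+ 2 -> f ((u + w) / v) = 2 * u / v.
Proof.
move=> v_neq0 pyth.
have vv : v * v = (w - u) * (u + w).
  have -> : (w - u) * (u + w) = w ^+ 2 - u ^+ 2 by ring.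
  by rewrite pyth; ring.
have uw_neq0 : u + w != 0.
  apply: contra_neq v_neq0 => uw0.
  by apply/eqP; rewrite -[v == 0]orbb -mulf_eq0 vv uw0 mulr0.
rewrite /f invf_div.
have -> : v / (u + w) = (w - u) / v by apply/eqP; rewrite eqr_div // vv.
by field.
Qed.

Section AffineCurve.
Variables a b : rat.

Definition on_affine_curve (t r s : rat) : Prop :=
  [/\ 0 < t, 0 < r, 0 < s, r ^+ 2 = t ^+ 2 + a ^+ 2 & s ^+ 2 = t ^+ 2 + b ^+ 2].

Definition sol_of (t r s : rat) : rat * rat := ((t + r) / a, (b + s) / t).

Hypothesis a_gt0 : 0 < a.
Hypothesis b_gt0 : 0 < b.

Lemma f_sol_of_fst t r s : on_affine_curve t r s -> f (sol_of t r s).1 = 2 * t / a.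
Proof. by case=> *; rewrite f_pythagorean ?gt_eqF. Qed.

Lemma f_sol_of_snd t r s : on_affine_curve t r s -> f (sol_of t r s).2 = 2 * b / t.
Proof. by case=> t_gt0 _ _ _ es; rewrite f_pythagorean ?gt_eqF // es addrC. Qed.

Lemma sol_of_gt0 t r s : on_affine_curve t r s ->
  0 < (sol_of t r s).1 /\ 0 < (sol_of t r s).2.
Proof. by case=> *; rewrite !divr_gt0 ?addr_gt0. Qed.

Lemma f_sol_of_mul t r s : on_affine_curve t r s ->
  f (sol_of t r s).1 * f (sol_of t r s).2 = 4 * b / a.
Proof.
move=> curve; have [t_gt0 _ _ _ _] := curve.
by rewrite f_sol_of_fst // f_sol_of_snd //; field; rewrite !gt_eqF.
Qed.

Lemma sol_of_slope_inj t1 r1 s1 t2 r2 s2 :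
  on_affine_curve t1 r1 s1 -> on_affine_curve t2 r2 s2 ->
  sol_of t1 r1 s1 = sol_of t2 r2 s2 -> t1 = t2.
Proof.
move=> curve1 curve2 /(congr1 (fun p => f p.1)).
have halve t : 2 * t / a * (a / 2) = t by field; rewrite gt_eqF.
by rewrite !f_sol_of_fst // => /(congr1 ( *%R^~ (a / 2))); rewrite !halve.
Qed.

End AffineCurve.

Definition affine_of (p : zpoint) : rat * rat * rat :=
  let: ZPoint n d r s := p in (ratZ n / ratZ d, ratZ r / ratZ d, ratZ s / ratZ d).

Lemma admissible_on_affine_curve a b k p : admissible a b k p ->
  let: (t, r, s) := affine_of p in on_affine_curve (ratZ a) (ratZ b) t r s.
Proof.
case: p => n d r s [[er es] [n_gt0 d_gt0 r_gt0 s_gt0] _ _ _].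
have d_neq0 : d <> 0 by lia.
by split; rewrite ?divr_gt0 ?ratZ_gt0 //; apply: ratZ_affine_sqr.
Qed.

Definition solution (p : zpoint) : rat * rat :=
  let: (t, r, s) := affine_of p in sol_of 64 225 t r s.

Lemma admissible_is_sol k p : admissible 64 225 k p -> is_sol (solution p).
Proof.
move/admissible_on_affine_curve; rewrite /solution.
case: (affine_of p) => [[t r] s]; rewrite -[ratZ 64]/(64 : rat) -[ratZ 225]/(225 : rat).
move=> curve; have pos64 : (0 : rat) < 64 by rewrite ltr0n.
have pos225 : (0 : rat) < 225 by rewrite ltr0n.
have [x_gt0 y_gt0] := sol_of_gt0 pos64 pos225 curve.
split; first exact: x_gt0.
split; first exact: y_gt0.
by rewrite (f_sol_of_mul pos64 curve) /f; field.
Qed.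

Lemma admissible_solution_neq k1 k2 p1 p2 :
  admissible 64 225 k1 p1 -> admissible 64 225 k2 p2 -> (k1 < k2)%N -> solution p1 != solution p2.
Proof.
move=> adm1 adm2 lt_k; have := admissible_on_affine_curve adm1.
have := admissible_on_affine_curve adm2; rewrite /solution.
case: p1 p2 adm1 adm2 => [n1 d1 r1 s1] [n2 d2 r2 s2].
move=> [_ [_ d1_gt0 _ _] n1_odd d1_pow2 _] [_ [_ d2_gt0 _ _] n2_odd d2_pow2 _] /=.
move=> curve2 curve1; have pos64 : 0 < ratZ 64 := isT.
apply/eqP => /(sol_of_slope_inj pos64 curve1 curve2) /eqP.
rewrite eqr_div ?lt0r_neq0 ?ratZ_gt0 // -!ratZM => /eqP /ratZ_inj.
exact: odd_pow2_cross_neq lt_k n1_odd n2_odd d1_pow2 d2_pow2.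
Qed.

Lemma injective_notin (T : eqType) (g : nat -> T) (s : seq T) :
  injective g -> exists n, g n \notin s.
Proof.
move=> g_inj; set l := map g (iota 0 (size s).+1).
have [/allP l_sub | /allPn [_ /mapP [n _ ->] gn_notin]] := boolP (all (mem s) l).
  have := uniq_leq_size (_ : uniq l) l_sub.
  by rewrite map_inj_uniq // iota_uniq size_map size_iota ltnn => /(_ isT).
by exists n.
Qed.

Lemma solution_point_inj : injective (fun n => solution (point n)).
Proof.
have sol_neq i j : (i < j)%N -> solution (point i) != solution (point j).
  by move=> lt_ij; apply: admissible_solution_neq (admissible_point i) (admissible_point j) _; rewrite ltn_add2r.
move=> i j eq_ij; apply/eqP.
by case: ltngtP => // /sol_neq; rewrite eq_ij eqxx.
Qed.

Theorem mainTheorem9 :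
  forall s : seq (rat * rat), exists p : rat * rat, is_sol p /\ p \notin s.
Proof.
move=> s; have [n sol_notin] := injective_notin s solution_point_inj.
by exists (solution (point n)); split; first exact: admissible_is_sol (admissible_point n).
Qed.
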